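(* Let $\gamma_1,\dots,\gamma_N\in\mathbb{R}$ and $\alpha_1,\dots,\alpha_N>0$, and let $K(t)=\sum_{j=1}^N\gamma_je^{-\alpha_jt}$, whose Laplace transform is $k(\lambda)=\sum_{j=1}^N\frac{\gamma_j}{\lambda+\alpha_j}$. Then $K(t)\ge0$ for all $t\ge0$ if and only if $\sum_{j=1}^N\frac{\gamma_j}{(\lambda+\alpha_j)^m}\ge0$ for every integer $m\ge1$ and every $\lambda>0$. *)

From Stdlib Require Import Reals List.
Open Scope R_scope.

(* Finite sum over indices j = 0, ..., N-1 (the paper's j = 1..N, shifted). *)
Definition sumN (N : nat) (f : nat -> R) : R :=
  fold_right Rplus 0 (map f (seq 0 N)).

Definition Kexp (N : nat) (gamma alpha : nat -> R) (t : R) : R :=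
  sumN N (fun j => gamma j * exp (- alpha j * t)).

(* If K >= 0 on [0, +oo), then for every nonnegative mixture of decaying
   exponentials g(c) = sum_i w_i e^{-c s_i} one has
   sum_j gamma_j g(lambda + alpha_j) = sum_i w_i e^{-lambda s_i} K(s_i) >= 0.
   Such mixtures are closed under products, and Riemann sums of
   int_0^oo e^{-cs} ds are mixtures converging to 1/c, so their m-th powers
   converge to 1/c^m.  Conversely, the Post-Widder inversion
   K(t) = lim_n (n/t)^n sum_j gamma_j / (n/t + alpha_j)^n,
   which rests on (1 + x/n)^{-n} -> e^{-x}, gives K(t) >= 0 for t > 0, and
   continuity of K gives K(0) >= 0. *)

From Stdlib Require Import Reals List Lra Lia.
From Coquelicot Require Import Coquelicot.
Open Scope R_scope.

Lemma sumN_S (N : nat) (f : nat -> R) : sumN (S N) f = sumN N f + f N.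
Proof.
  assert (Hfold : forall a l, fold_right Rplus a l = fold_right Rplus 0 l + a).
  { intros a l; induction l as [|x l IH]; simpl; [ring | rewrite IH; ring]. }
  unfold sumN. rewrite seq_S, map_app, fold_right_app. simpl.
  rewrite Hfold. ring.
Qed.

Lemma sumN_ext (N : nat) (f g : nat -> R) :
  (forall j, (j < N)%nat -> f j = g j) -> sumN N f = sumN N g.
Proof.
  induction N as [|N IH]; intros Hfg; [reflexivity|].
  rewrite !sumN_S, (Hfg N), IH; [reflexivity| |lia].
  intros j Hj; apply Hfg; lia.
Qed.

Lemma sumN_scal (N : nat) (c : R) (f : nat -> R) :
  sumN N (fun j => c * f j) = c * sumN N f.
Proof. induction N as [|N IH]; [unfold sumN; simpl; ring|]. rewrite !sumN_S, IH; ring. Qed.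

Lemma sumN_plus (N : nat) (f g : nat -> R) :
  sumN N (fun j => f j + g j) = sumN N f + sumN N g.
Proof. induction N as [|N IH]; [unfold sumN; simpl; ring|]. rewrite !sumN_S, IH; ring. Qed.

Lemma is_lim_seq_sumN (N : nat) (u : nat -> nat -> R) (l : nat -> R) :
  (forall j, (j < N)%nat -> is_lim_seq (fun n => u n j) (l j)) ->
  is_lim_seq (fun n => sumN N (u n)) (sumN N l).
Proof.
  induction N as [|N IH]; intros Hu.
  - apply is_lim_seq_const.
  - apply (is_lim_seq_ext (fun n => sumN N (u n) + u n N)); [intros; now rewrite sumN_S|].
    rewrite sumN_S. apply is_lim_seq_plus'; [apply IH; intros; apply Hu|apply Hu]; lia.
Qed.

Lemma is_lim_seq_nonneg (u : nat -> R) (l : R) :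
  (forall n, 0 <= u n) -> is_lim_seq u l -> 0 <= l.
Proof. intros Hu Hl. exact (is_lim_seq_le (fun _ => 0) u 0 l Hu (is_lim_seq_const 0) Hl). Qed.

Lemma is_lim_seq_pow (u : nat -> R) (l : R) (m : nat) :
  is_lim_seq u l -> is_lim_seq (fun n => u n ^ m) (l ^ m).
Proof.
  intros Hu; induction m as [|m IH]; simpl.
  - apply is_lim_seq_const.
  - apply is_lim_seq_mult'; assumption.
Qed.

Lemma is_lim_seq_inv_INR_S : is_lim_seq (fun n => / INR (S n)) 0.
Proof.
  apply (is_lim_seq_inv (fun n => INR (S n)) p_infty); [|discriminate].
  apply (is_lim_seq_incr_1 INR p_infty), is_lim_seq_INR.
Qed.

Lemma is_lim_seq_div_INR_S (y : R) : is_lim_seq (fun n => y / INR (S n)) 0.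
Proof.
  replace 0 with (y * 0) by ring.
  apply is_lim_seq_mult'; [apply is_lim_seq_const | apply is_lim_seq_inv_INR_S].
Qed.

Lemma derivable_pt_lim_seq (f : R -> R) (x l : R) (h : nat -> R) :
  derivable_pt_lim f x l -> is_lim_seq h 0 -> (forall n, h n <> 0) ->
  is_lim_seq (fun n => (f (x + h n) - f x) / h n) l.
Proof.
  intros Hf Hh Hnz. apply is_lim_seq_spec. intros eps.
  destruct (Hf eps (cond_pos eps)) as [delta Hdelta].
  apply is_lim_seq_spec in Hh. destruct (Hh delta) as [M HM].
  exists M. intros n Hn. apply Hdelta; [apply Hnz|].
  specialize (HM n Hn). now rewrite Rminus_0_r in HM.
Qed.

Lemma is_lim_seq_compound_exp (y : R) : 0 <= y ->
  is_lim_seq (fun n => (1 + y / INR (S n)) ^ S n) (exp y).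
Proof.
  intros Hy. assert (HS : forall n, 0 < INR (S n)) by (intros; apply lt_0_INR; lia).
  destruct (Req_dec y 0) as [->|Hy0].
  - rewrite exp_0. apply (is_lim_seq_ext (fun _ => 1)); [|apply is_lim_seq_const].
    intros n. unfold Rdiv. now rewrite Rmult_0_l, Rplus_0_r, pow1.
  - set (x n := y / INR (S n)).
    assert (Hx : forall n, 0 < x n).
    { intros n. apply Rdiv_lt_0_compat; [lra|apply HS]. }
    apply (is_lim_seq_ext (fun n => exp (y * ((ln (1 + x n) - ln 1) / x n)))).
    + intros n. fold (x n).
      assert (H1x : 0 < 1 + x n) by (specialize (Hx n); lra).
      rewrite <- (exp_ln ((1 + x n) ^ S n)) by (apply pow_lt; exact H1x).
      rewrite ln_pow, ln_1 by exact H1x. f_equal.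
      unfold x. field. split; [apply Rgt_not_eq, HS | exact Hy0].
    + replace (exp y) with (exp (y * / 1)) by (f_equal; field).
      apply is_lim_seq_continuous; [apply derivable_continuous_pt, derivable_pt_exp|].
      apply is_lim_seq_mult'; [apply is_lim_seq_const|].
      apply derivable_pt_lim_seq; [apply derivable_pt_lim_ln; lra | apply is_lim_seq_div_INR_S |].
      intros n; apply Rgt_not_eq, Hx.
Qed.

Inductive exp_mixture : (R -> R) -> Prop :=
| exp_mixture_atom (w s : R) :
    0 <= w -> 0 <= s -> exp_mixture (fun c => w * exp (- c * s))
| exp_mixture_add (f g : R -> R) :
    exp_mixture f -> exp_mixture g -> exp_mixture (fun c => f c + g c)
| exp_mixture_ext (f g : R -> R) :
    exp_mixture f -> (forall c, f c = g c) -> exp_mixture g.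

Lemma exp_mixture_mul_atom (w s : R) (g : R -> R) : 0 <= w -> 0 <= s ->
  exp_mixture g -> exp_mixture (fun c => w * exp (- c * s) * g c).
Proof.
  intros Hw Hs Hg; induction Hg as [w' s' Hw' Hs'|f g _ IHf _ IHg|f g _ IH Hfg].
  - apply (exp_mixture_ext (fun c => w * w' * exp (- c * (s + s')))).
    + apply exp_mixture_atom; [apply Rmult_le_pos|]; lra.
    + intros c. replace (- c * (s + s')) with (- c * s + - c * s') by ring.
      rewrite exp_plus; ring.
  - apply (exp_mixture_ext (fun c => w * exp (- c * s) * f c + w * exp (- c * s) * g c)).
    + apply exp_mixture_add; assumption.
    + intros c; ring.
  - apply (exp_mixture_ext _ _ IH). intros c; now rewrite Hfg.
Qed.

Lemma exp_mixture_mul (f g : R -> R) :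
  exp_mixture f -> exp_mixture g -> exp_mixture (fun c => f c * g c).
Proof.
  intros Hf Hg; induction Hf as [w s Hw Hs|f f' _ IHf _ IHf'|f f' _ IH Hff'].
  - apply exp_mixture_mul_atom; assumption.
  - apply (exp_mixture_ext (fun c => f c * g c + f' c * g c)).
    + apply exp_mixture_add; assumption.
    + intros c; ring.
  - apply (exp_mixture_ext _ _ IH). intros c; now rewrite Hff'.
Qed.

Lemma exp_mixture_pow (f : R -> R) (m : nat) :
  exp_mixture f -> exp_mixture (fun c => f c ^ m).
Proof.
  intros Hf; induction m as [|m IH].
  - apply (exp_mixture_ext (fun c => 1 * exp (- c * 0))).
    + apply exp_mixture_atom; lra.
    + intros c. rewrite Rmult_0_r, exp_0; simpl; ring.
  - apply (exp_mixture_mul _ _ Hf IH).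
Qed.

Lemma exp_mixture_sum (w s : nat -> R) (M : nat) :
  (forall k, 0 <= w k) -> (forall k, 0 <= s k) ->
  exp_mixture (fun c => sum_f_R0 (fun k => w k * exp (- c * s k)) M).
Proof.
  intros Hw Hs; induction M as [|M IH]; simpl.
  - apply exp_mixture_atom; auto.
  - apply exp_mixture_add; [exact IH | apply exp_mixture_atom; auto].
Qed.

Lemma exp_INR_mult (x : R) (k : nat) : exp (INR k * x) = exp x ^ k.
Proof.
  induction k as [|k IH]; [simpl; now rewrite Rmult_0_l, exp_0|].
  rewrite S_INR, Rmult_plus_distr_r, Rmult_1_l, exp_plus, IH; simpl; ring.
Qed.

Lemma sum_exp_geometric (c h : R) (M : nat) : 0 < c -> 0 < h ->
  sum_f_R0 (fun k => h * exp (- c * (INR k * h))) M =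
  (1 - exp (- c * h) ^ S M) / c / ((exp (- c * h) - 1) / (- c * h)).
Proof.
  intros Hc Hh.
  assert (Hq : exp (- c * h) < 1) by (rewrite <- exp_0; apply exp_increasing; nra).
  rewrite (sum_eq _ (fun k => exp (- c * h) ^ k * h))
    by (intros k _; rewrite <- exp_INR_mult, Rmult_comm; f_equal; f_equal; ring).
  rewrite <- scal_sum, tech3 by lra. field. repeat split; lra.
Qed.

(* The left Riemann sum, with step 1/(n+1) on [0, n+1], of the integral of
   s |-> e^{-cs} over [0, +oo), which is 1/c. *)
Definition inv_riemann_sum (n : nat) (c : R) : R :=
  sum_f_R0 (fun k => / INR (S n) * exp (- c * (INR k * / INR (S n)))) (n * (n + 2)).

Lemma exp_mixture_inv_riemann_sum (n : nat) : exp_mixture (inv_riemann_sum n).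
Proof.
  assert (HS : 0 < / INR (S n)) by (apply Rinv_0_lt_compat, lt_0_INR; lia).
  apply exp_mixture_sum; intros k; [lra|].
  apply Rmult_le_pos; [apply pos_INR | lra].
Qed.

Lemma is_lim_seq_inv_riemann_sum (c : R) : 0 < c ->
  is_lim_seq (fun n => inv_riemann_sum n c) (/ c).
Proof.
  intros Hc. set (h n := / INR (S n)).
  assert (Hh : forall n, 0 < h n) by (intros; apply Rinv_0_lt_compat, lt_0_INR; lia).
  apply (is_lim_seq_ext
    (fun n => (1 - exp (- c) ^ S n) / c / ((exp (- c * h n) - 1) / (- c * h n)))).
  { intros n. unfold inv_riemann_sum. fold (h n). rewrite sum_exp_geometric by auto.
    rewrite <- !exp_INR_mult. do 4 f_equal.
    replace (S (n * (n + 2))) with (S n * S n)%nat by lia.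
    unfold h. rewrite mult_INR. field. apply not_0_INR; lia. }
  replace (/ c) with ((1 - 0) / c / 1) by (field; lra).
  apply is_lim_seq_div'; [apply is_lim_seq_div'; [| apply is_lim_seq_const | lra] | | lra].
  - apply is_lim_seq_minus'; [apply is_lim_seq_const|].
    apply (is_lim_seq_incr_1 (fun n => exp (- c) ^ n)), is_lim_seq_geom.
    rewrite Rabs_pos_eq by (apply Rlt_le, exp_pos).
    rewrite <- exp_0; apply exp_increasing; lra.
  - apply (is_lim_comp_seq (fun y => (exp y - 1) / y) _ 0 1); [apply is_lim_div_expm1_0 | |].
    + exists O. intros n _ E. injection E. specialize (Hh n). nra.
    + replace (Finite 0) with (Finite (- c * 0)) by (f_equal; ring).
      apply is_lim_seq_mult'; [apply is_lim_seq_const | apply is_lim_seq_inv_INR_S].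
Qed.

Section Kernel.

Variables (N : nat) (gamma alpha : nat -> R).

Lemma is_lim_seq_Kexp (u : nat -> R) (t : R) :
  is_lim_seq u t -> is_lim_seq (fun n => Kexp N gamma alpha (u n)) (Kexp N gamma alpha t).
Proof.
  intros Hu. apply is_lim_seq_sumN. intros j _.
  apply is_lim_seq_mult'; [apply is_lim_seq_const|].
  apply (is_lim_seq_continuous exp (fun n => - alpha j * u n));
    [apply derivable_continuous_pt, derivable_pt_exp|].
  apply is_lim_seq_mult'; [apply is_lim_seq_const | exact Hu].
Qed.

Lemma sumN_mixture_nonneg (lambda : R) (g : R -> R) : 0 <= lambda ->
  (forall t, 0 <= t -> 0 <= Kexp N gamma alpha t) -> exp_mixture g ->
  0 <= sumN N (fun j => gamma j * g (lambda + alpha j)).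
Proof.
  intros Hl HK Hg; induction Hg as [w s Hw Hs|f g _ IHf _ IHg|f g _ IH Hfg].
  - rewrite (sumN_ext _ _ (fun j => w * exp (- lambda * s) * (gamma j * exp (- alpha j * s)))).
    + rewrite sumN_scal. apply Rmult_le_pos; [|apply HK, Hs].
      apply Rmult_le_pos; [exact Hw | apply Rlt_le, exp_pos].
    + intros j _. replace (- (lambda + alpha j) * s) with (- lambda * s + - alpha j * s) by ring.
      rewrite exp_plus; ring.
  - rewrite (sumN_ext _ _
      (fun j => gamma j * f (lambda + alpha j) + gamma j * g (lambda + alpha j))) by (intros; ring).
    rewrite sumN_plus; lra.
  - rewrite (sumN_ext _ _ (fun j => gamma j * f (lambda + alpha j))) by (intros; now rewrite Hfg).
    exact IH.
Qed.

Hypothesis alpha_pos : forall j, (j < N)%nat -> 0 < alpha j.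

Lemma sumN_resolvent_rescale (m : nat) (x t : R) : 0 < x -> 0 < t ->
  sumN N (fun j => gamma j / (1 + alpha j * t / x) ^ m) =
  (x / t) ^ m * sumN N (fun j => gamma j / (x / t + alpha j) ^ m).
Proof.
  intros Hx Ht. rewrite <- sumN_scal. apply sumN_ext. intros j Hj.
  assert (Hq : 0 < alpha j * t / x) by (apply Rdiv_lt_0_compat; [apply Rmult_lt_0_compat|]; auto).
  replace (x / t + alpha j) with (x / t * (1 + alpha j * t / x)) by (field; lra).
  rewrite Rpow_mult_distr. field.
  split; apply pow_nonzero; [lra|]. apply Rgt_not_eq, Rdiv_lt_0_compat; assumption.
Qed.

Lemma is_lim_seq_post_widder (t : R) : 0 <= t ->
  is_lim_seq (fun n => sumN N (fun j => gamma j / (1 + alpha j * t / INR (S n)) ^ S n))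
    (Kexp N gamma alpha t).
Proof.
  intros Ht. apply is_lim_seq_sumN. intros j Hj.
  assert (Hat : 0 <= alpha j * t) by (apply Rmult_le_pos; [apply Rlt_le, alpha_pos|]; assumption).
  replace (gamma j * exp (- alpha j * t)) with (gamma j * / exp (alpha j * t))
    by (rewrite <- exp_Ropp; f_equal; f_equal; ring).
  apply is_lim_seq_mult'; [apply is_lim_seq_const|].
  apply (is_lim_seq_inv _ (exp (alpha j * t))); [apply is_lim_seq_compound_exp, Hat|].
  intros E. injection E. apply Rgt_not_eq, exp_pos.
Qed.

Lemma Kexp_nonneg_of_moments :
  (forall (m : nat) (lambda : R), (1 <= m)%nat -> 0 < lambda ->
     0 <= sumN N (fun j => gamma j / (lambda + alpha j) ^ m)) ->
  forall t, 0 <= t -> 0 <= Kexp N gamma alpha t.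
Proof.
  intros Hmom.
  assert (HS : forall n, 0 < INR (S n)) by (intros; apply lt_0_INR; lia).
  assert (Hpos : forall t, 0 < t -> 0 <= Kexp N gamma alpha t).
  { intros t Ht. refine (is_lim_seq_nonneg _ _ _ (is_lim_seq_post_widder t _)); [intros n|lra].
    rewrite sumN_resolvent_rescale by auto.
    apply Rmult_le_pos; [apply pow_le, Rlt_le|apply Hmom; [lia|]]; apply Rdiv_lt_0_compat; auto. }
  intros t Ht. destruct (Rle_lt_or_eq_dec _ _ Ht) as [Ht'|<-]; [apply Hpos, Ht'|].
  apply (is_lim_seq_nonneg (fun n => Kexp N gamma alpha (/ INR (S n)))).
  - intros n. apply Hpos, Rinv_0_lt_compat, HS.
  - apply is_lim_seq_Kexp, is_lim_seq_inv_INR_S.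
Qed.

Lemma moments_nonneg_of_Kexp_nonneg (m : nat) (lambda : R) : 0 < lambda ->
  (forall t, 0 <= t -> 0 <= Kexp N gamma alpha t) ->
  0 <= sumN N (fun j => gamma j / (lambda + alpha j) ^ m).
Proof.
  intros Hl HK.
  refine (is_lim_seq_nonneg
    (fun n => sumN N (fun j => gamma j * inv_riemann_sum n (lambda + alpha j) ^ m)) _ _ _).
  - intros n. apply (sumN_mixture_nonneg lambda (fun c => inv_riemann_sum n c ^ m));
      [lra | exact HK | apply exp_mixture_pow, exp_mixture_inv_riemann_sum].
  - apply is_lim_seq_sumN. intros j Hj. unfold Rdiv. rewrite <- pow_inv.
    apply is_lim_seq_mult'; [apply is_lim_seq_const|].
    apply is_lim_seq_pow, is_lim_seq_inv_riemann_sum.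
    specialize (alpha_pos j Hj); lra.
Qed.

End Kernel.

Theorem lemma5p1 (N : nat) (gamma alpha : nat -> R)
  (halpha : forall j, (j < N)%nat -> 0 < alpha j) :
  (forall t : R, 0 <= t -> 0 <= Kexp N gamma alpha t) <->
  (forall (m : nat) (lambda : R), (1 <= m)%nat -> 0 < lambda ->
     0 <= sumN N (fun j => gamma j / (lambda + alpha j) ^ m)).
Proof.
  split.
  - intros HK m lambda _ Hl.
    exact (moments_nonneg_of_Kexp_nonneg N gamma alpha halpha m lambda Hl HK).
  - exact (Kexp_nonneg_of_moments N gamma alpha halpha).
Qed.
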